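(* If $G$ is a connected graph with $|V(G)| = n > 1$, then some value occurs at least $\left\lceil 2n/\tau(G) \right\rceil$ times in the detour sequence of $G$ (that is, the detour sequence of $G$ has a repetition of length at least $\lceil 2n/\tau(G)\rceil$).
   Context: All graphs are finite and simple. The order of a path is its number of vertices. For a vertex $v$ of $G$, $\tau(v)$ is the order of a longest path in $G$ having $v$ as an endvertex, and $\tau(G)=\max_v \tau(v)$ is the order of a longest path in $G$. The detour sequence of $G$ is the nondecreasing sequence of the values $\tau(v)$, $v\in V(G)$ (one term per vertex). A repetition in a nondecreasing sequence is a maximal block of at least two consecutive equal terms; its length is the number of terms in the block. *)

From mathcomp Require Import all_boot.
Set Implicit Arguments. Unset Strict Implicit. Unset Printing Implicit Defensive.

(* A finite simple graph: vertex type T : finType, adjacency e : rel T,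
   assumed symmetric and irreflexive in the theorem. *)

(* v :: s is a path in the graph (distinct vertices, consecutive adjacent),
   having v as an endvertex; its order (number of vertices) is (size s).+1. *)
Definition gpath_from (T : finType) (e : rel T) (v : T) (s : seq T) : bool :=
  uniq (v :: s) && path e v s.

(* tau(v): order of a longest path with v as an endvertex.
   A path has at most #|T| vertices, so s ranges over k-tuples, k < #|T|. *)
Definition tau (T : finType) (e : rel T) (v : T) : nat :=
  \max_(k < #|T| | [exists s : k.-tuple T, gpath_from e v s]) k.+1.

Definition tauG (T : finType) (e : rel T) : nat := \max_(v : T) tau e v.

Definition detour_mult (T : finType) (e : rel T) (k : nat) : nat :=
  #|[set v : T | tau e v == k]|.

Definition ceil_div (a b : nat) : nat := (a + b.-1) %/ b.

From mathcomp Require Import all_boot.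
From mathcomp Require Import zify.
Set Implicit Arguments. Unset Strict Implicit. Unset Printing Implicit Defensive.

(* Fix a longest path P; it has t = tau(G) vertices.  Cutting P at a vertex w
   leaves two subpaths starting at w whose orders add up to t + 1, so the
   longer one has more than ceil(t/2) vertices unless t is odd and w is the
   middle vertex of P.  A vertex off P reaches P by a path that first meets P
   at some w and continues along either half at w, so its detour value is even
   larger.  Hence all vertices but at most one (none if t is even) have their
   detour value among the floor(t/2) integers in (ceil(t/2), t].  If no value
   occurs more than M times, n <= floor(t/2) M + (t mod 2), and this forces
   2n <= M t as soon as 2 <= t <= n. *)

Lemma ceil_div_le a b M : 0 < b -> a <= M * b -> ceil_div a b <= M.
Proof. by move=> b_gt0 le_a; rewrite /ceil_div -ltnS ltn_divLR // mulSn; lia. Qed.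

Lemma double_le_mul_of_half n t M :
  1 < t <= n -> n <= t./2 * M + odd t -> 2 * n <= M * t.
Proof. by nia. Qed.

Lemma card_le_mul_fibers (T : finType) (f : T -> nat) lo n M (A : {set T}) :
  {in A, forall v, lo <= f v < lo + n} ->
  (forall i, #|[set v | f v == i]| <= M) -> #|A| <= n * M.
Proof.
move=> f_range fiber_le; elim: n A f_range => [|n IHn] A f_range.
  rewrite leqn0 cards_eq0; apply/eqP/setP => v; rewrite inE.
  by apply/negP => /f_range; lia.
rewrite mulSn -(cardsID [set v | f v == lo + n] A).
apply: leq_add; first exact: leq_trans (subset_leq_card (subsetIr _ _)) (fiber_le _).
apply: IHn => v; rewrite !inE => /andP [ne_v /f_range]; lia.
Qed.

Lemma uphalf_addS_le_max a b : uphalf (a + b.+1) <= maxn a b + (a == b).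
Proof. by lia. Qed.

Section Detour.
Variables (T : finType) (e : rel T).

Lemma gpath_size_le_card v s : gpath_from e v s -> (size s).+1 <= #|T|.
Proof. by case/andP=> /card_uniqP /= <- _; apply: max_card. Qed.

Lemma gpath_le_tau v s : gpath_from e v s -> (size s).+1 <= tau e v.
Proof.
move=> path_s; have s_lt := gpath_size_le_card path_s.
apply: (@leq_bigmax_cond _ _ (fun k : 'I_#|T| => k.+1) (Ordinal s_lt)).
by apply/existsP; exists (in_tuple s).
Qed.

Lemma tau_witness v : exists2 s, gpath_from e v s & tau e v = (size s).+1.
Proof.
have path0 : gpath_from e v [::] by [].
pose i0 := Ordinal (gpath_size_le_card path0).
have ex0 : [exists s : i0.-tuple T, gpath_from e v s] by apply/existsP; exists [tuple].
rewrite /tau (bigmax_eq_arg i0) //.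
by case: arg_maxnP => // i /existsP [s path_s] _; exists s; rewrite ?size_tuple.
Qed.

Lemma tau_le_tauG v : tau e v <= tauG e.
Proof. exact: (@leq_bigmax T (tau e)). Qed.

Lemma tauG_witness (x : T) : exists v s, gpath_from e v s /\ tauG e = (size s).+1.
Proof.
have [v tauGE] : {v | tauG e = tau e v} by apply: eq_bigmax; apply/card_gt0P; exists x.
by have [s path_s tauE] := tau_witness v; exists v, s; rewrite tauGE tauE.
Qed.

Lemma exists_max_detour_mult (x : T) :
  exists k, forall i, detour_mult e i <= detour_mult e k.
Proof.
exists (tau e [arg max_(v > x) detour_mult e (tau e v)]).
case: arg_maxnP => // vm _ max_vm i.
case: (posnP (detour_mult e i)) => [-> // | /card_gt0P [v]].
by rewrite inE => /eqP <-; apply: max_vm.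
Qed.

Lemma gpath_cat v q w r : path e v (rcons q w) -> uniq (v :: q) ->
  gpath_from e w r -> ~~ has [in v :: q] (w :: r) -> gpath_from e v (q ++ w :: r).
Proof.
move=> path_q uniq_q /andP [uniq_r path_r] disj.
rewrite /gpath_from -cat_cons cat_uniq uniq_q disj uniq_r.
by rewrite -cat_rcons cat_path path_q last_rcons.
Qed.

Hypothesis e_sym : symmetric e.

Lemma gpath_split p1 w p2 : uniq (p1 ++ w :: p2) -> sorted e (p1 ++ w :: p2) ->
  gpath_from e w p2 /\ gpath_from e w (rev p1).
Proof.
rewrite cat_uniq sorted_cat_cons.
move=> /and3P [uniq_p1 /hasPn p1_notin uniq_p2] /andP [sorted_p1 path_p2].
split; first by rewrite /gpath_from uniq_p2.
rewrite /gpath_from /= mem_rev p1_notin ?mem_head // rev_uniq uniq_p1 /=.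
have e_rev : (fun x y => e y x) =2 e by move=> x y; rewrite e_sym.
by move: sorted_p1; rewrite -(eq_sorted e_rev) -rev_sorted rev_rcons.
Qed.

Lemma tau_on_path p1 w p2 : uniq (p1 ++ w :: p2) -> sorted e (p1 ++ w :: p2) ->
  maxn (size p1) (size p2) < tau e w.
Proof.
move=> uniq_P sorted_P; have [path2 path1] := gpath_split uniq_P sorted_P.
by rewrite gtn_max -{1}(size_rev p1) !gpath_le_tau.
Qed.

Hypothesis e_conn : forall x y : T, connect e x y.

Lemma tau_off_path P x0 v : uniq P -> sorted e P -> x0 \in P -> v \notin P ->
  exists p1 w p2, P = p1 ++ w :: p2 /\ (maxn (size p1) (size p2)).+1 < tau e v.
Proof.
move=> uniq_P sorted_P x0P vP.
have [p path_p last_p] := connectP (e_conn v x0).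
case: (shortenP path_p) last_p => s path_s uniq_s _ last_s.
have x0_s : x0 \in s.
  have := mem_last v s; rewrite -last_s inE => /predU1P [x0v | //].
  by rewrite -x0v x0P in vP.
have hit_P : has [in P] s by apply/hasP; exists x0.
move: path_s uniq_s; case/split_find: hit_P => w q r Pw noPq.
rewrite cat_path cat_rcons -cat_cons cat_uniq => /andP [path_q _] /and3P [uniq_q _ _].
have {}noPq : ~~ has [in P] (v :: q) by rewrite /= negb_or vP.
move: uniq_P sorted_P noPq; case/splitPr: Pw => p1 p2 uniq_P sorted_P noPq.
have extend r' : {subset w :: r' <= p1 ++ w :: p2} -> gpath_from e w r' ->
    (size r').+2 <= tau e v.
  move=> sub_r' path_r'; apply: leq_trans (gpath_le_tau (gpath_cat path_q uniq_q path_r' _)).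
    by rewrite size_cat /= !ltnS leq_addl.
  by rewrite has_sym; apply: contra noPq; apply: sub_has.
have [path2 path1] := gpath_split uniq_P sorted_P.
exists p1, w, p2; split => //; rewrite -maxnSS gtn_max -{1}(size_rev p1).
by rewrite !extend // => x; rewrite mem_cat !inE ?mem_rev => /orP [] ->; rewrite ?orbT.
Qed.

Lemma uphalf_lt_tau P x0 v : uniq P -> sorted e P -> x0 \in P ->
  uphalf (size P) < tau e v \/ odd (size P) /\ v = nth x0 P (size P)./2.
Proof.
move=> uniq_P sorted_P x0P; case: (boolP (v \in P)) => [vP | vNP]; last first.
  have [p1 [w [p2 [-> tau_gt]]]] := tau_off_path uniq_P sorted_P x0P vNP.
  left; apply: leq_ltn_trans tau_gt; rewrite size_cat.
  by apply: leq_trans (uphalf_addS_le_max _ _) _; rewrite -addn1 leq_add2l leq_b1.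
move: uniq_P sorted_P; case/splitPr: vP => p1 p2 uniq_P sorted_P.
rewrite size_cat /=; have [eq_size | ne_size] := eqVneq (size p1) (size p2).
  rewrite -eq_size addnS addnn /= odd_double uphalf_double nth_cat ltnn subnn.
  by right.
left; apply: leq_ltn_trans (tau_on_path uniq_P sorted_P).
by have := uphalf_addS_le_max (size p1) (size p2); rewrite (negbTE ne_size) addn0.
Qed.

Lemma card_tau_le_uphalf P x0 : uniq P -> sorted e P -> x0 \in P ->
  #|[set v | tau e v <= uphalf (size P)]| <= odd (size P).
Proof.
move=> uniq_P sorted_P x0P.
have exceptional v : tau e v <= uphalf (size P) -> odd (size P) /\ v = nth x0 P (size P)./2.
  by rewrite leqNgt; case: (uphalf_lt_tau v uniq_P sorted_P x0P) => [->|].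
case: (boolP (odd (size P))) => [odd_P | even_P].
  rewrite /= -(cards1 (nth x0 P (size P)./2)); apply/subset_leq_card/subsetP => v.
  by rewrite !inE => /exceptional [_ ->].
rewrite /= leqn0 cards_eq0; apply/eqP/setP => v; rewrite !inE.
by apply/negP => /exceptional [odd_P _]; rewrite odd_P in even_P.
Qed.

Lemma card_le_half_mul P x0 M : uniq P -> sorted e P -> x0 \in P ->
  (forall v, tau e v <= size P) -> (forall i, detour_mult e i <= M) ->
  #|T| <= (size P)./2 * M + odd (size P).
Proof.
move=> uniq_P sorted_P x0P tau_le mult_le.
rewrite -(cardsC [set v | tau e v <= uphalf (size P)]) addnC.
apply: leq_add; last exact: card_tau_le_uphalf uniq_P sorted_P x0P.
apply: (card_le_mul_fibers (lo := (uphalf (size P)).+1)) mult_le => v.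
by rewrite !inE -ltnNge; have := tau_le v; lia.
Qed.

Hypothesis e_irr : irreflexive e.

Lemma one_lt_tauG (x y : T) : x != y -> 1 < tauG e.
Proof.
move=> neq_xy; have [[|z p] /= path_p last_p] := connectP (e_conn x y).
  by rewrite last_p eqxx in neq_xy.
case/andP: path_p => e_xz _.
have path_xz : gpath_from e x [:: z].
  rewrite /gpath_from /= inE e_xz !andbT; apply: contraTneq e_xz => <-.
  by rewrite e_irr.
exact: leq_trans (gpath_le_tau path_xz) (tau_le_tauG x).
Qed.

End Detour.

Theorem theorem1p7 (T : finType) (e : rel T)
  (e_sym : symmetric e) (e_irr : irreflexive e)
  (e_conn : forall x y : T, connect e x y)
  (hn : 1 < #|T|) :
  exists k : nat, ceil_div (2 * #|T|) (tauG e) <= detour_mult e k.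
Proof.
have /card_gt1P [x [y [_ _ neq_xy]]] := hn.
have [v0 [s0 [path_s0 tauGE]]] := tauG_witness e x.
have [k max_k] := exists_max_detour_mult e x.
have t_gt1 : 1 < tauG e := one_lt_tauG e_conn e_irr neq_xy.
exists k; apply: ceil_div_le; first exact: ltnW.
apply: double_le_mul_of_half; first by rewrite t_gt1 tauGE (gpath_size_le_card path_s0).
case/andP: path_s0 => uniq_s0 sorted_s0; rewrite tauGE.
apply: (card_le_half_mul e_sym e_conn uniq_s0 sorted_s0 (mem_head v0 s0)) max_k.
by move=> v; rewrite /= -tauGE tau_le_tauG.
Qed.
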